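(* Let $N\ge1$, $S_1,\dots,S_N\ge1$, and consider an $S_1\times\cdots\times S_N$-setting $N$-partite correlation experiment with joint distributions $P_{(s_1,\dots,s_N)}$ on $\Lambda_1^{(s_1)}\times\cdots\times\Lambda_N^{(s_N)}$, where the outcomes are real with $\lambda_n^{(s_n)}\in\Lambda_n^{(s_n)}\subseteq[-1,1]$, $\sup\Lambda_n^{(s_n)}=1$, $\inf\Lambda_n^{(s_n)}=-1$ for all $s_n,n$ (of any spectral type, discrete or continuous), and suppose it admits an LHV model. Then for any collection of real coefficients $\gamma_{(s_{n_1},\dots,s_{n_M})}$ ($1\le M\le N$, $1\le n_1<\dots<n_M\le N$, $s_{n_j}\in\{1,\dots,S_{n_j}\}$) the tight linear LHV constraint on correlation functions $$\min_{\eta_1\in\{-1,1\}^{S_1},\dots,\eta_N\in\{-1,1\}^{S_N}}\sum_{\substack{1\le n_1<\dots<n_M\le N\\ M=1,\dots,N}}F_M^{(\gamma)}(\eta_{n_1},\dots,\eta_{n_M})\le\sum_{\substack{1\le n_1<\dots<n_M\le N\\ M=1,\dots,N}}\ \sum_{s_{n_1},\dots,s_{n_M}}\gamma_{(s_{n_1},\dots,s_{n_M})}\big\langle\lambda_{n_1}^{(s_{n_1})}\cdots\lambda_{n_M}^{(s_{n_M})}\big\rangle_{LHV}\le\max_{\eta_1\in\{-1,1\}^{S_1},\dots,\eta_N\in\{-1,1\}^{S_N}}\sum_{\substack{1\le n_1<\dots<n_M\le N\\ M=1,\dots,N}}F_M^{(\gamma)}(\eta_{n_1},\dots,\eta_{n_M})$$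 holds, where $F_M^{(\gamma)}(\eta_{n_1},\dots,\eta_{n_M})=\sum_{s_{n_1},\dots,s_{n_M}}\gamma_{(s_{n_1},\dots,s_{n_M})}\eta_{n_1}^{(s_{n_1})}\cdots\eta_{n_M}^{(s_{n_M})}$ for $\eta_n=(\eta_n^{(1)},\dots,\eta_n^{(S_n)})\in\mathbb{R}^{S_n}$; the extrema are over all $2^{S_1+\dots+S_N}$ vertices of the hypercube $[-1,1]^{S_1+\dots+S_N}$.
   Context: The experiment admitting an LHV model is characterized by the existence of a probability measure $\mu$ on the product of all outcome spaces $\prod_{n}\prod_{s_n}\Lambda_n^{(s_n)}$ whose marginal on $(\lambda_1^{(s_1)},\dots,\lambda_N^{(s_N)})$ is $P_{(s_1,\dots,s_N)}$ for every joint setting. The correlation function $\langle\lambda_{n_1}^{(s_{n_1})}\cdots\lambda_{n_M}^{(s_{n_M})}\rangle_{LHV}$ is $\int\lambda_{n_1}^{(s_{n_1})}\cdots\lambda_{n_M}^{(s_{n_M})}\,dP_{(s_1,\dots,s_N)}$ for any joint setting with the given settings at sites $n_1,\dots,n_M$ (in the LHV case it does not depend on the settings at the other sites). A linear LHV constraint is tight if, within the class of experiments with the given outcome sets admitting an LHV model, its bounds cannot be improved. *)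

From HB Require Import structures.
From mathcomp Require Import all_boot all_order all_algebra.
From mathcomp Require Import all_classical all_reals all_analysis.

Set Implicit Arguments.
Unset Strict Implicit.
Unset Printing Implicit Defensive.
Import Order.TTheory GRing.Theory Num.Theory.
Local Open Scope classical_set_scope.
Local Open Scope ring_scope.

Section Bell.
Variables (R : realType) (N : nat) (S : 'I_N -> nat).

(* measurement sites: pairs (n, s_n), n a party, s_n one of its S_n settings *)
Definition site := {n : 'I_N & 'I_(S n)}.

(* ambient space of the product of all outcome spaces: one real outcome
   lambda_n^(s_n) per pair (n, s_n); finite product of R, measurable
   structure = product (Borel) sigma-algebra of tuples *)
Definition hidden := (#|{: site}|).-tuple R.

Definition coord (w : hidden) (n : 'I_N) (s : 'I_(S n)) : R :=
  tnth w (enum_rank (Tagged (fun m => 'I_(S m)) s)).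

Definition setting := forall n : 'I_N, 'I_(S n).

Definition proj_setting (sg : setting) (w : hidden) : N.-tuple R :=
  [tuple coord w (sg n) | n < N].

(* An experiment: for every joint setting a probability distribution on
   Lam_1^(s_1) x ... x Lam_N^(s_N) (a probability on R^N concentrated on a
   measurable subset of that product). *)
Definition experiment (Lam : forall n : 'I_N, 'I_(S n) -> set R)
    (P : forall sg : setting, probability (N.-tuple R) R) : Prop :=
  forall sg : setting, exists B : set (N.-tuple R),
    [/\ measurable B,
        B `<=` [set x | forall n : 'I_N, Lam n (sg n) (tnth x n)] &
        P sg B = 1%E].

(* LHV model: a probability measure mu on the product of all outcome spaces
   whose marginal on (lambda_1^(s_1),...,lambda_N^(s_N)) is P_(s_1,...,s_N) *)
Definition LHV_model (Lam : forall n : 'I_N, 'I_(S n) -> set R)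
    (P : forall sg : setting, probability (N.-tuple R) R)
    (mu : probability hidden R) : Prop :=
  (exists B : set hidden,
    [/\ measurable B,
        B `<=` [set w | forall (n : 'I_N) (s : 'I_(S n)), Lam n s (coord w s)] &
        mu B = 1%E]) /\
  forall (sg : setting) (A : set (N.-tuple R)), measurable A ->
    P sg A = mu (proj_setting sg @^-1` A).

Definition LHV_experiment (Lam : forall n : 'I_N, 'I_(S n) -> set R)
    (P : forall sg : setting, probability (N.-tuple R) R) : Prop :=
  experiment Lam P /\ exists mu, LHV_model Lam P mu.

(* A term of the constraint: a choice of sites n_1 < ... < n_M (those n with
   t n = Some _) together with settings s_(n_j) there (the Some values);
   the term is non-trivial (M >= 1) iff some t n is not None. *)
Definition term := {dffun forall n : 'I_N, option 'I_(S n)}.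

Definition nontrivial (t : term) : bool := [exists n, t n != None].

Definition extends (sg : setting) (t : term) : Prop :=
  forall (n : 'I_N) (s : 'I_(S n)), t n = Some s -> sg n = s.

Definition correlation (P : forall sg : setting, probability (N.-tuple R) R)
    (sg : setting) (t : term) : R :=
  Rintegral (P sg) setT
    (fun x : N.-tuple R => \prod_(n < N) (if t n is Some _ then tnth x n else 1)).

(* the middle expression of the constraint, where ext t is the joint setting
   used to evaluate the correlation function of term t *)
Definition LHV_value (P : forall sg : setting, probability (N.-tuple R) R)
    (ext : term -> setting) (gamma : term -> R) : R :=
  \sum_(t : term | nontrivial t) gamma t * correlation P (ext t) t.

(* vertices of the hypercube [-1,1]^(S_1+...+S_N): a sign eta_n^(s_n) per site *)
Definition vertex := {ffun site -> bool}.

Definition sgnb (b : bool) : R := if b then 1 else -1.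

Definition eta (v : vertex) (n : 'I_N) (s : 'I_(S n)) : R :=
  sgnb (v (Tagged (fun m => 'I_(S m)) s)).

Definition Fsum (gamma : term -> R) (v : vertex) : R :=
  \sum_(t : term | nontrivial t)
     gamma t * \prod_(n < N) (if t n is Some s then eta v s else 1).

Definition vertex0 : vertex := [ffun _ => true].

Definition Fmax (gamma : term -> R) : R :=
  \big[Num.max/Fsum gamma vertex0]_(v : vertex) Fsum gamma v.

Definition Fmin (gamma : term -> R) : R :=
  \big[Num.min/Fsum gamma vertex0]_(v : vertex) Fsum gamma v.

End Bell.

From mathcomp Require Import all_boot all_order all_algebra.
From mathcomp Require Import all_classical all_reals all_analysis.
From mathcomp Require Import ring lra measurable_realfun.
Set Implicit Arguments.
Unset Strict Implicit.
Unset Printing Implicit Defensive.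
Import Order.TTheory GRing.Theory Num.Theory.
Local Open Scope classical_set_scope.
Local Open Scope ring_scope.

(* Both bounds come from the multilinear polynomial
   Fpoly(u) = sum_t gamma_t prod_(n in t) u(n, s_n) in the variables u(n, s_n).
   Being affine in each variable, Fpoly attains its extrema over the cube
   [-1,1]^sites at vertices.  For an LHV model mu, concentrated on outcomes in
   that cube, the middle expression is the mu-integral of Fpoly at the outcomes,
   hence lies between the extrema.  Conversely, since sup = 1 and inf = -1, every
   vertex can be approximated by admissible outcomes, and the deterministic model
   giving these outcomes has value Fpoly at them, arbitrarily close to the vertex
   value because Fpoly is Lipschitz on the cube. *)

Lemma normr_prodB_le (R : realDomainType) (I : Type) (r : seq I) (P : pred I)
    (a b : I -> R) :
  (forall i, `|a i| <= 1) -> (forall i, `|b i| <= 1) ->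
  `|\prod_(i <- r | P i) a i - \prod_(i <- r | P i) b i|
    <= \sum_(i <- r | P i) `|a i - b i|.
Proof.
move=> a1 b1; elim: r => [|x r IH]; first by rewrite !big_nil subrr normr0.
rewrite !big_cons; case: (P x) => //.
set A := \prod_(i <- r | P i) a i; set B := \prod_(i <- r | P i) b i.
have B1 : `|B| <= 1.
  by rewrite normr_prod prodr_ile1 // => i _; rewrite normr_ge0 b1.
have -> : a x * A - b x * B = a x * (A - B) + (a x - b x) * B by ring.
apply: le_trans (ler_normD _ _) _; rewrite !normrM.
have := a1 x; have := normr_ge0 (a x - b x); have := normr_ge0 (A - B).
have := normr_ge0 B; have := normr_ge0 (a x); nra.
Qed.

Section Multilinear.
Variables (R : realType) (N : nat) (S : 'I_N -> nat).
Implicit Types (gamma : term S -> R) (t : term S) (u : site S -> R).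

Definition site_of (n : 'I_N) (s : 'I_(S n)) : site S :=
  Tagged (fun m => 'I_(S m)) s.

Definition monomial t u : R :=
  \prod_(n < N) (if t n is Some s then u (site_of s) else 1).

Definition Fpoly gamma u : R := \sum_(t : term S | nontrivial t) gamma t * monomial t u.

Lemma Fsum_Fpoly gamma v : Fsum gamma v = Fpoly gamma (fun i => sgnb R (v i)).
Proof. by []. Qed.

Definition in_cube u := forall i, -1 <= u i <= 1.

Definition update u (i : site S) (x : R) : site S -> R :=
  fun j => if j == i then x else u j.

Lemma monomial_affine t u i :
  exists a b : R, forall x, monomial t (update u i x) = a + b * x.
Proof.
case: i => n0 s0; rewrite /monomial.
have offsite x : \prod_(n < N | n != n0)
    (if t n is Some s then update u (Tagged _ s0) x (site_of s) else 1) =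
    \prod_(n < N | n != n0) (if t n is Some s then u (site_of s) else 1).
  apply: eq_bigr => n nn0; case: (t n) => // s.
  rewrite /update; case: eqP => // /(congr1 tag) /= nE.
  by rewrite nE eqxx in nn0.
set P := \prod_(n < N | n != n0) (if t n is Some s then u (site_of s) else 1).
case tn0: (t n0) => [s|]; last first.
  by exists P, 0 => x; rewrite (bigD1 n0) //= offsite -/P tn0; lra.
have [ss0|ss0] := eqVneq s s0.
  subst s; exists 0, P => x; rewrite (bigD1 n0) //= offsite -/P tn0 /update eqxx; lra.
exists (P * u (site_of s)), 0 => x; rewrite (bigD1 n0) //= offsite -/P tn0 /update.
case: eqP => [tagE|_]; first by rewrite (eq_from_Tagged tagE) eqxx in ss0.
lra.
Qed.

Lemma Fpoly_update gamma u i x :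
  Fpoly gamma (update u i x) =
    (1 + x) / 2 * Fpoly gamma (update u i 1) + (1 - x) / 2 * Fpoly gamma (update u i (-1)).
Proof.
rewrite /Fpoly !mulr_sumr -big_split /=; apply: eq_bigr => t _.
have [a [b ab]] := monomial_affine t u i.
by rewrite !ab; field.
Qed.

Lemma Fsum_bounds gamma v : Fmin gamma <= Fsum gamma v <= Fmax gamma.
Proof. by rewrite bigmin_le le_bigmax. Qed.

Definition nonvertex u : {set site S} :=
  [set i | (u i != 1) && (u i != -1)].

(* Induction on the number of coordinates of [u] that are not signs: by
   [Fpoly_update], [Fpoly u] is a convex combination of the values obtained by
   setting one such coordinate to [1] and to [-1]. *)
Lemma Fpoly_cube_bounds gamma u : in_cube u -> Fmin gamma <= Fpoly gamma u <= Fmax gamma.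
Proof.
have [k] := ubnP #|nonvertex u|; elim: k u => // k IH u nvu cube_u.
have [nv0|[i nvi]] := set_0Vmem (nonvertex u).
  have -> : u = (fun i => sgnb R ([ffun i => u i == 1] i)).
    apply/funext => i; rewrite ffunE /sgnb.
    have : i \notin nonvertex u by rewrite nv0 inE.
    by rewrite inE negb_and !negbK => /orP[]/eqP->; rewrite ?eqxx // lt_eqF ?ltrN10.
  exact: Fsum_bounds.
have fix_sign y : y = 1 \/ y = -1 ->
    [/\ in_cube (update u i y) & (#|nonvertex (update u i y)| < k)%N].
  move=> y1; split.
    by move=> j; rewrite /update; case: eqP => // _; case: y1 => ->; lra.
  suff sub : nonvertex (update u i y) \subset nonvertex u :\ i.
    move: nvu; rewrite (cardsD1 i) nvi add1n ltnS.
    exact: leq_ltn_trans (subset_leq_card sub).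
  apply/fintype.subsetP => j; rewrite !inE /update.
  have [->|ji] := eqVneq j i; last by [].
  by case: y1 => ->; rewrite eqxx ?andbF.
have [cube1 lt1] := fix_sign 1 (or_introl erefl).
have [cube2 lt2] := fix_sign (-1) (or_intror erefl).
have /andP[lo1 hi1] := IH _ lt1 cube1; have /andP[lo2 hi2] := IH _ lt2 cube2.
have -> : u = update u i (u i) by apply/funext => j; rewrite /update; case: eqP => // ->.
rewrite Fpoly_update; have /andP[xlo xhi] := cube_u i.
by apply/andP; split; nra.
Qed.

Lemma monomial_in_cube t u : in_cube u -> `|monomial t u| <= 1.
Proof.
move=> cube_u; rewrite normr_prod prodr_ile1 // => n _.
case: (t n) => [s|]; last by rewrite normr1 ler01 lexx.
by rewrite normr_ge0 ler_norml cube_u.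
Qed.

Lemma monomial_lipschitz t u u' (dl : R) : 0 <= dl -> in_cube u -> in_cube u' ->
  (forall i, `|u i - u' i| <= dl) -> `|monomial t u - monomial t u'| <= N%:R * dl.
Proof.
move=> dl0 cube_u cube_u' udl; apply: le_trans (normr_prodB_le _ _ _ _) _.
- by move=> n; case: (t n) => [s|]; rewrite ?normr1 // ler_norml.
- by move=> n; case: (t n) => [s|]; rewrite ?normr1 // ler_norml.
rewrite mulr_natl -[X in _ *+ X]card_ord -sumr_const; apply: ler_sum => n _.
case: (t n) => [s|]; first exact: udl.
by rewrite subrr normr0.
Qed.

Lemma Fpoly_lipschitz gamma u u' (dl : R) : 0 <= dl -> in_cube u -> in_cube u' ->
  (forall i, `|u i - u' i| <= dl) ->
  `|Fpoly gamma u - Fpoly gamma u'| <= (\sum_(t | nontrivial t) `|gamma t|) * (N%:R * dl).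
Proof.
move=> dl0 cube_u cube_u' udl; rewrite /Fpoly -sumrB mulr_suml.
apply: le_trans (ler_norm_sum _ _ _) _; apply: ler_sum => t _.
by rewrite -mulrBr normrM ler_wpM2l // monomial_lipschitz.
Qed.

Lemma Fmax_gt gamma (c : R) : c < Fmax gamma -> exists v, c < Fsum gamma v.
Proof.
move=> cFmax; apply: contrapT => /forallNP Fc.
have Fc' v : Fsum gamma v <= c by rewrite leNgt; apply/negP; exact: Fc.
by move: cFmax; rewrite ltNge bigmax_le.
Qed.

Lemma Fmin_lt gamma (c : R) : Fmin gamma < c -> exists v, Fsum gamma v < c.
Proof.
move=> Fminc; apply: contrapT => /forallNP Fc.
have Fc' v : c <= Fsum gamma v by rewrite leNgt; apply/negP; exact: Fc.
by move: Fminc; rewrite ltNge le_bigmin.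
Qed.

End Multilinear.

Lemma Rintegral_sum d (T : measurableType d) (R : realType) (mu : {measure set T -> \bar R})
    (D : set T) (I : Type) (r : seq I) (P : pred I) (f : I -> T -> R) :
  measurable D -> (forall i, mu.-integrable D (EFin \o f i)) ->
  \int[mu]_(x in D) (\sum_(i <- r | P i) f i x) = \sum_(i <- r | P i) \int[mu]_(x in D) f i x.
Proof.
move=> mD intf; rewrite /Rintegral.
under eq_integral do rewrite -sumEFin.
rewrite integral_sum // sum_fine // => i _.
exact: integrable_fin_num (intf i).
Qed.

Section FullMeasureSet.
Context d (T : measurableType d) (R : realType) (mu : probability T R)
  (B : set T) (mB : measurable B) (muB : mu B = 1%E).

Let muBC : mu (~` B) = 0%E.
Proof. by rewrite probability_setC // muB subee. Qed.

Lemma bounded_integrable (f : T -> R) (M : R) : measurable_fun setT f ->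
  (forall x, B x -> `|f x| <= M) -> mu.-integrable setT (EFin \o f).
Proof.
move=> mf fM; apply/(negligible_integrable (measurableC mB)) => //.
  exact/measurable_EFinP.
rewrite setTD setCK; apply: measurable_bounded_integrable => //.
- exact: le_lt_trans (probability_le1 _ mB) (ltry _).
- exact: measurable_funS mf.
- exists M; split=> [|K MK x Bx]; first exact: num_real.
  exact: le_trans (fM x Bx) (ltW MK).
Qed.

Lemma Rintegral_full_measure (f : T -> R) : mu.-integrable setT (EFin \o f) ->
  \int[mu]_x f x = \int[mu]_(x in B) f x.
Proof.
move=> intf; rewrite /Rintegral (negligible_integral (measurableC mB)) //.
by rewrite setTD setCK.
Qed.

Lemma Rintegral_full_bounds (f : T -> R) (a b : R) : mu.-integrable setT (EFin \o f) ->
  (forall x, B x -> a <= f x <= b) -> a <= \int[mu]_x f x <= b.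
Proof.
move=> intf fab; rewrite Rintegral_full_measure //.
have intB := integrableS measurableT mB (subsetT B) intf.
have cstE c : \int[mu]_(x in B) c = c.
  by rewrite Rintegral_cst // (congr1 fine muB) mulr1.
have cst_int c : mu.-integrable B (EFin \o fun=> c) by exact: finite_measure_integrable_cst.
rewrite -{1}(cstE a) -(cstE b) !le_Rintegral // => x /fab /andP[] //.
Qed.

End FullMeasureSet.

Section LHVBounds.
Variables (R : realType) (N : nat) (S : 'I_N -> nat).
Implicit Types (gamma : term S -> R) (t : term S) (sg : setting S).

Definition coords (w : hidden R S) : site S -> R := fun i => tnth w (enum_rank i).

Definition outcome_product t (x : N.-tuple R) : R :=
  \prod_(n < N) (if t n is Some _ then tnth x n else 1).

Lemma outcome_product_proj t sg w : extends sg t ->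
  outcome_product t (proj_setting sg w) = monomial t (coords w).
Proof.
move=> sg_t; apply: eq_bigr => n _.
by case tn: (t n) => [s|] //; rewrite tnth_mktuple (sg_t n s tn).
Qed.

Lemma measurable_outcome_product t : measurable_fun setT (outcome_product t).
Proof.
apply: measurable_prod => n _.
by case: (t n) => [_|]; [exact: measurable_tnth | exact: measurable_cst].
Qed.

Lemma measurable_monomial_coords t : measurable_fun setT (fun w => monomial t (coords w)).
Proof.
apply: measurable_prod => n _.
by case: (t n) => [s|]; [exact: measurable_tnth | exact: measurable_cst].
Qed.

Lemma measurable_proj_setting sg : measurable_fun setT (@proj_setting R N S sg).
Proof.
apply/measurable_fun_tnthP => n.
rewrite (_ : _ \o _ = fun w : hidden R S => tnth w (enum_rank (site_of (sg n)))).
  exact: measurable_tnth.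
by apply/funext => w; rewrite /= tnth_mktuple.
Qed.

Variables (mu : probability (hidden R S) R) (B : set (hidden R S)).
Hypotheses (mB : measurable B) (muB : mu B = 1%E)
  (B_cube : forall w, B w -> in_cube (coords w)).

Lemma monomial_coords_integrable t :
  mu.-integrable setT (EFin \o fun w => monomial t (coords w)).
Proof.
apply: (bounded_integrable mB muB (M := 1)); first exact: measurable_monomial_coords.
by move=> w /B_cube; exact: monomial_in_cube.
Qed.

Lemma correlation_LHV (P : forall sg, probability (N.-tuple R) R) sg t :
  (forall A, measurable A -> P sg A = mu (proj_setting sg @^-1` A)) ->
  extends sg t -> correlation P sg t = \int[mu]_w monomial t (coords w).
Proof.
move=> marginal sg_t; rewrite /correlation /Rintegral; congr fine.
have mf : measurable_fun setT (EFin \o outcome_product t).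
  by apply/measurable_EFinP; exact: measurable_outcome_product.
have int_comp : mu.-integrable (proj_setting sg @^-1` setT)
    ((EFin \o outcome_product t) \o proj_setting sg).
  rewrite preimage_setT; apply: eq_integrable (monomial_coords_integrable t) => // w _.
  by rewrite /= outcome_product_proj.
transitivity (\int[mu]_(w in proj_setting sg @^-1` setT)
    ((EFin \o outcome_product t) \o proj_setting sg) w)%E.
  rewrite -(integral_pushforward (measurable_proj_setting sg) mf int_comp measurableT).
  apply: eq_measure_integral => [|? A mA _]; first exact: measurable_proj_setting.
  exact: marginal.
by rewrite preimage_setT; apply: eq_integral => w _; rewrite /= outcome_product_proj.
Qed.

Lemma scaled_monomial_integrable (c : R) t :
  mu.-integrable setT (EFin \o fun w => c * monomial t (coords w)).
Proof.
by apply: eq_integrable (integrableZl measurableT c (monomial_coords_integrable t)).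
Qed.

Lemma Fpoly_coords_integrable gamma :
  mu.-integrable setT (EFin \o fun w => Fpoly gamma (coords w)).
Proof.
have := @integrable_sum _ _ _ mu setT measurableT _ (index_enum (term S)) (@nontrivial N S)
  (fun t w => (gamma t * monomial t (coords w))%:E)
  (fun t _ => scaled_monomial_integrable (gamma t) t).
by apply: eq_integrable => // w _; rewrite /= sumEFin.
Qed.

Lemma LHV_value_integral (P : forall sg, probability (N.-tuple R) R)
    (ext : term S -> setting S) gamma :
  (forall sg A, measurable A -> P sg A = mu (proj_setting sg @^-1` A)) ->
  (forall t, extends (ext t) t) ->
  LHV_value P ext gamma = \int[mu]_w Fpoly gamma (coords w).
Proof.
move=> marginal ext_t.
rewrite /LHV_value /Fpoly Rintegral_sum //; last by move=> t; exact: scaled_monomial_integrable.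
apply: eq_bigr => t _; rewrite (correlation_LHV (marginal (ext t)) (ext_t t)); symmetry.
exact: RintegralZl measurableT (monomial_coords_integrable t).
Qed.

End LHVBounds.

Lemma LHV_value_bounds (R : realType) (N : nat) (S : 'I_N -> nat)
    (Lam : forall n : 'I_N, 'I_(S n) -> set R)
    (P : forall sg : setting S, probability (N.-tuple R) R)
    (ext : term S -> setting S) (gamma : term S -> R) :
  (forall n s, Lam n s `<=` [set x | -1 <= x <= 1]) ->
  LHV_experiment Lam P -> (forall t, extends (ext t) t) ->
  Fmin gamma <= LHV_value P ext gamma <= Fmax gamma.
Proof.
move=> Lam_cube [_ [mu [[B [mB B_Lam muB]] marginal]]] ext_t.
have B_cube w : B w -> in_cube (coords w).
  by move=> Bw [n s]; exact: (Lam_cube n s _ (B_Lam w Bw n s)).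
rewrite (LHV_value_integral mB muB B_cube gamma marginal ext_t).
apply: (Rintegral_full_bounds mB muB); first exact: (Fpoly_coords_integrable mB muB B_cube).
by move=> w /B_cube; exact: Fpoly_cube_bounds.
Qed.

Lemma measurable_set1_tuple (R : realType) (n : nat) (x : n.-tuple R) : measurable [set x].
Proof.
have -> : [set x] =
    \bigcap_(i in [set: 'I_n]) ((fun y : n.-tuple R => tnth y i) @^-1` [set tnth x i]).
  apply/seteqP; split => [y -> i _ //|y xy]; apply: eq_from_tnth => i; exact: xy i I.
apply: fin_bigcap_measurable => [|i _]; first exact: finite_finset.
by rewrite -[X in measurable X]setTI; exact: measurable_tnth.
Qed.

Lemma dirac_probabilityE d (T : measurableType d) (R : realType) (a : T) (A : set T) :
  (\d_a : probability T R) A = (a \in A)%:R%:E.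
Proof. exact: diracE. Qed.

Section Deterministic.
Variables (R : realType) (N : nat) (S : 'I_N -> nat).

Definition hidden_of (u : site S -> R) : hidden R S :=
  [tuple u (enum_val i) | i < #|{: site S}|].

Lemma coords_hidden_of (u : site S -> R) : coords (hidden_of u) = u.
Proof. by apply/funext => i; rewrite /coords tnth_mktuple enum_rankK. Qed.

Definition deterministic (u : site S -> R) (sg : setting S) : probability (N.-tuple R) R :=
  \d_(proj_setting sg (hidden_of u)).

Lemma deterministic_LHV (Lam : forall n : 'I_N, 'I_(S n) -> set R) (u : site S -> R) :
  (forall n (s : 'I_(S n)), Lam n s (u (site_of s))) ->
  LHV_experiment Lam (deterministic u).
Proof.
move=> u_Lam; have Lam_coord n (s : 'I_(S n)) : Lam n s (coords (hidden_of u) (site_of s)).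
  by rewrite coords_hidden_of.
split.
  move=> sg; exists [set proj_setting sg (hidden_of u)]; split.
  - exact: measurable_set1_tuple.
  - by move=> x -> n; rewrite tnth_mktuple; exact: Lam_coord.
  - by rewrite dirac_probabilityE mem_set.
exists \d_(hidden_of u); split.
  exists [set hidden_of u]; split; first exact: measurable_set1_tuple.
    by move=> w -> n s; exact: Lam_coord.
  by rewrite dirac_probabilityE mem_set.
by move=> sg A mA; rewrite !dirac_probabilityE.
Qed.

Lemma deterministic_LHV_value (u : site S -> R) (ext : term S -> setting S)
    (gamma : term S -> R) :
  (forall t, extends (ext t) t) -> LHV_value (deterministic u) ext gamma = Fpoly gamma u.
Proof.
move=> ext_t; apply: eq_bigr => t _; congr (_ * _).
rewrite /correlation /Rintegral integral_dirac //; last first.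
  by apply/measurable_EFinP; exact: measurable_outcome_product.
rewrite diracE mem_set // mul1e /= -[X in _ = monomial _ X]coords_hidden_of.
exact: outcome_product_proj.
Qed.

End Deterministic.

Lemma sign_adherent (R : realType) (A : set R) (b : bool) (dl : R) : 0 < dl ->
  A `<=` [set x | -1 <= x <= 1] -> sup A = 1 -> inf A = -1 ->
  exists2 x, A x & `|x - sgnb R b| <= dl.
Proof.
move=> dl0 A_cube supA infA.
have A0 : A !=set0.
  apply/set0P/eqP => A_eq0; move: supA; rewrite A_eq0 sup0 => /eqP.
  by rewrite eq_sym oner_eq0.
case: b; rewrite /sgnb.
- have [|x Ax supx] := sup_adherent dl0 (conj A0 _).
    by exists 1 => y /A_cube /andP[].
  have /andP[_ x1] := A_cube x Ax; rewrite supA in supx.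
  by exists x => //; rewrite ler_norml; apply/andP; split; lra.
- have [|x Ax infx] := inf_adherent dl0 (conj A0 _).
    by exists (-1) => y /A_cube /andP[].
  have /andP[x1 _] := A_cube x Ax; rewrite infA in infx.
  by exists x => //; rewrite ler_norml; apply/andP; split; lra.
Qed.

Section Tightness.
Variables (R : realType) (N : nat) (S : 'I_N -> nat).

Definition outcome_sets (Lam : forall n : 'I_N, 'I_(S n) -> set R) :=
  forall (n : 'I_N) (s : 'I_(S n)),
    [/\ Lam n s `<=` [set x : R | -1 <= x <= 1], sup (Lam n s) = 1 & inf (Lam n s) = -1].

Lemma vertex_approx (Lam : forall n : 'I_N, 'I_(S n) -> set R) (hLam : outcome_sets Lam)
    (v : vertex S) (dl : R) : 0 < dl ->
  exists u : site S -> R, [/\ forall n (s : 'I_(S n)), Lam n s (u (site_of s)),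
    in_cube u & forall i, `|u i - sgnb R (v i)| <= dl].
Proof.
move=> dl0.
have near_sign (i : site S) : exists x, Lam (tag i) (tagged i) x /\ `|x - sgnb R (v i)| <= dl.
  case: i => n s; have [Lam_cube supL infL] := hLam n s.
  by have [x Lx xv] := sign_adherent (v (site_of s)) dl0 Lam_cube supL infL; exists x.
have [u uP] := choice near_sign; exists u; split.
- by move=> n s; case: (uP (site_of s)).
- by move=> [n s]; case: (uP (site_of s)); case: (hLam n s) => Lam_cube _ _ /Lam_cube.
- by move=> i; case: (uP i).
Qed.

Lemma Fsum_approx (Lam : forall n : 'I_N, 'I_(S n) -> set R) (hLam : outcome_sets Lam)
    (gamma : term S -> R) (v : vertex S) (eps : R) : 0 < eps ->
  exists P, LHV_experiment Lam P /\ forall ext, (forall t, extends (ext t) t) ->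
    `|LHV_value P ext gamma - Fsum gamma v| < eps.
Proof.
(* [K] is a Lipschitz constant of [Fpoly gamma] for the sup norm. *)
move=> eps0; pose K := (\sum_(t | nontrivial t) `|gamma t|) * N%:R.
have K0 : 0 <= K by rewrite mulr_ge0 ?sumr_ge0.
have dl0 : 0 < eps / (K + 1) by rewrite divr_gt0 // ltr_wpDl.
have [u [u_Lam cube_u uv]] := vertex_approx hLam v dl0.
exists (deterministic u); split; first exact: deterministic_LHV.
move=> ext ext_t; rewrite deterministic_LHV_value // Fsum_Fpoly.
have cube_v : in_cube (fun i => sgnb R (v i)).
  by move=> i; rewrite /sgnb; case: (v i); apply/andP; split; lra.
apply: le_lt_trans (Fpoly_lipschitz gamma (ltW dl0) cube_u cube_v uv) _.
rewrite !mulrA ltr_pdivrMr ?ltr_wpDl // /K; nra.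
Qed.

End Tightness.

Theorem corollary1 (R : realType) (N : nat) (S : 'I_N -> nat)
  (Lam : forall n : 'I_N, 'I_(S n) -> set R)
  (hN : (0 < N)%N) (hS : forall n : 'I_N, (0 < S n)%N)
  (hLam : forall (n : 'I_N) (s : 'I_(S n)),
     [/\ Lam n s `<=` [set x : R | -1 <= x <= 1],
         sup (Lam n s) = 1 & inf (Lam n s) = -1])
  (gamma : term S -> R) :
  [/\ (* the constraint holds for every experiment admitting an LHV model *)
      (forall P : forall sg : setting S, probability (N.-tuple R) R,
         LHV_experiment Lam P ->
         forall ext : term S -> setting S, (forall t, extends (ext t) t) ->
         Fmin gamma <= LHV_value P ext gamma <= Fmax gamma),
      (* tightness of the upper bound *)
      (forall c : R, c < Fmax gamma ->
         exists P : forall sg : setting S, probability (N.-tuple R) R,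
           LHV_experiment Lam P /\
           forall ext : term S -> setting S, (forall t, extends (ext t) t) ->
           c < LHV_value P ext gamma) &
      (* tightness of the lower bound *)
      (forall c : R, Fmin gamma < c ->
         exists P : forall sg : setting S, probability (N.-tuple R) R,
           LHV_experiment Lam P /\
           forall ext : term S -> setting S, (forall t, extends (ext t) t) ->
           LHV_value P ext gamma < c)].
Proof.
have Lam_cube n s : Lam n s `<=` [set x : R | -1 <= x <= 1] by case: (hLam n s).
split.
- by move=> P LHV_P ext ext_t; exact: LHV_value_bounds.
- move=> c /Fmax_gt[v cv]; have eps0 : 0 < Fsum gamma v - c by rewrite subr_gt0.
  have [P [LHV_P Pv]] := Fsum_approx hLam gamma v eps0.
  by exists P; split => // ext /Pv; rewrite ltr_norml => /andP[+ _]; lra.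
- move=> c /Fmin_lt[v vc]; have eps0 : 0 < c - Fsum gamma v by rewrite subr_gt0.
  have [P [LHV_P Pv]] := Fsum_approx hLam gamma v eps0.
  by exists P; split => // ext /Pv; rewrite ltr_norml => /andP[_]; lra.
Qed.
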